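(* For all $m\geq 2$ and $n\geq 1$, \[ s_{n,m}(211,213)=\frac14\Big(\big(2-m\sqrt2\big)\big(1-\sqrt2\big)^{n-1}+\big(2+m\sqrt2\big)\big(1+\sqrt2\big)^{n-1}\Big). \]
   Context: $[n]_m=\{1^m,\ldots,n^m\}$; a permutation of $[n]_m$ is a sequence of length $nm$ in which each element of $[n]$ appears exactly $m$ times. A sequence avoids a pattern $\pi$ if it has no subsequence order-isomorphic to $\pi$ (same relative order and same equalities among entries). $s_{n,m}(\Pi)$ is the number of permutations of $[n]_m$ avoiding all patterns in $\Pi$. *)

From HB Require Import structures.
From mathcomp Require Import all_boot all_order all_algebra.
Set Implicit Arguments. Unset Strict Implicit. Unset Printing Implicit Defensive.

Definition multiset_nm (n m : nat) : seq nat :=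
  flatten [seq nseq m i | i <- iota 1 n].

Definition order_iso (s p : seq nat) : bool :=
  (size s == size p) &&
  [forall i : 'I_(size p), forall j : 'I_(size p),
     ((nth 0 s i < nth 0 s j) == (nth 0 p i < nth 0 p j)) &&
     ((nth 0 s i == nth 0 s j) == (nth 0 p i == nth 0 p j))].

Definition contains (w p : seq nat) : bool :=
  [exists b : (size w).-tuple bool, order_iso (mask b w) p].

Definition avoids_all (Pi : seq (seq nat)) (w : seq nat) : bool :=
  all (fun p => ~~ contains w p) Pi.

(* s_{n,m}(Pi): number of permutations of [n]_m avoiding every pattern in Pi.
   [permutations t] is the duplicate-free list of all rearrangements of t. *)
Definition s_nm (n m : nat) (Pi : seq (seq nat)) : nat :=
  count (avoids_all Pi) (permutations (multiset_nm n m)).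

From HB Require Import structures.
From mathcomp Require Import all_boot all_order all_algebra.
From mathcomp Require Import zify ring.

(* A word contains 211 or 213 exactly when it has a subsequence x y z with
   y < x and (z = y or z > x); such triples are called [forbidden].  The proof
   is bijective: we build explicitly the list [avoiders m n] of all avoiders
   and show that it is duplicate-free, sound and complete.  Looking at the
   occurrences of the least letter 1 in an avoider w of [n]_m (m >= 2, n >= 3)
   gives exactly three shapes, where (v+k) denotes v with every letter raised
   by k and v avoids on [n-1]_m (shapes A, B) or [n-2]_m (shape C):
     A : 1^(m-1) (v+1) 1        B : 1^m (v+1)        C : 1^(m-1) 2^(m-1) (v+2) 1 2.
   Hence a_n = 2 a_(n-1) + a_(n-2) with a_1 = 1 and a_2 = m + 1 (for n = 2 the
   avoiders are 1^(m-1) 2^j 1 2^(m-j), 0 <= j <= m), and solving this Pell-type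
   recurrence gives the closed form. *)

Set Implicit Arguments.
Unset Strict Implicit.
Unset Printing Implicit Defensive.

Lemma forall_ord3 (P : 'I_3 -> bool) :
  [forall i : 'I_3, P i] = [&& P ord0, P (@Ordinal 3 1 isT) & P ord_max].
Proof.
apply/forallP/and3P => [H|[H0 H1 H2]]; first by split; apply: H.
by case=> [[|[|[|i]]] Hi] //; [congr (P _): H0 | congr (P _): H1 | congr (P _): H2];
  apply: val_inj.
Qed.

Lemma order_iso_211 x y z : order_iso [:: x; y; z] [:: 2; 1; 1] = (y < x) && (z == y).
Proof.
rewrite /order_iso /= !forall_ord3 /=.
by case: (ltngtP x y) => ?; case: (ltngtP x z) => ?; case: (ltngtP y z) => ? //=; lia.
Qed.

Lemma order_iso_213 x y z : order_iso [:: x; y; z] [:: 2; 1; 3] = (y < x) && (x < z).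
Proof.
rewrite /order_iso /= !forall_ord3 /=.
by case: (ltngtP x y) => ?; case: (ltngtP x z) => ?; case: (ltngtP y z) => ? //=; lia.
Qed.

Lemma contains_triple w p : size p = 3 ->
  contains w p <-> exists x y z, subseq [:: x; y; z] w /\ order_iso [:: x; y; z] p.
Proof.
move=> size_p; split.
- case/existsP => b iso_b.
  have : size (mask b w) = 3 by case/andP: iso_b => /eqP; rewrite size_p.
  case E: (mask b w) => [|x [|y [|z [|t s]]]] // _.
  by exists x, y, z; rewrite -E mask_subseq.
- case=> x [y [z [/subseqP [b size_b E] iso_xyz]]].
  by apply/existsP; exists (Tuple (introT eqP size_b)); rewrite /= -E.
Qed.

Definition forbidden (x y z : nat) : bool := (y < x) && ((z == y) || (x < z)).

Definition has_forbidden (w : seq nat) : Prop :=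
  exists x y z, subseq [:: x; y; z] w /\ forbidden x y z.

Lemma avoids_211_213 w :
  avoids_all [:: [:: 2; 1; 1]; [:: 2; 1; 3]] w <-> ~ has_forbidden w.
Proof.
rewrite /avoids_all /= andbT; split.
- move=> /andP [/negP no211 /negP no213] [x [y [z [sub /andP [yx /orP [zy|xz]]]]]].
  + by apply: no211; apply/contains_triple => //; exists x, y, z; rewrite order_iso_211 yx zy.
  + by apply: no213; apply/contains_triple => //; exists x, y, z; rewrite order_iso_213 yx xz.
- move=> no_forb; apply/andP; split; apply/negP => /contains_triple [] // x [y [z [sub]]].
  + rewrite order_iso_211 => /andP [yx zy].
    by apply: no_forb; exists x, y, z; rewrite /forbidden yx zy.
  + rewrite order_iso_213 => /andP [yx xz].
    by apply: no_forb; exists x, y, z; rewrite /forbidden yx xz orbT.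
Qed.

Lemma subseq_rcons2 (T : eqType) (t s : seq T) z c :
  subseq (rcons t z) (rcons s c) = subseq (rcons t z) s || subseq t s && (z == c).
Proof.
elim: s t => [|d s IH] [|x t] /=.
- by case: (z == c).
- by case: (x == c); case: t.
- by case: (z == d); rewrite ?sub0seq // !sub1seq mem_rcons in_cons orbC.
- by case: (x == d); [exact: IH | exact: (IH (x :: t))].
Qed.

Lemma subseq_middle (T : eqType) (p u t : seq T) : subseq u (p ++ u ++ t).
Proof. exact: subseq_trans (prefix_subseq u t) (suffix_subseq p _). Qed.

Lemma subseq_pair_after (T : eqType) (y z : T) s t :
  y \notin s -> subseq [:: y; z] (s ++ y :: t) -> z \in t.
Proof.
elim: s => [|x s IH] /=; first by rewrite eqxx sub1seq.
by rewrite in_cons negb_or => /andP [/negbTE -> /IH].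
Qed.

Lemma subseq_pair_count (T : eqType) (a : T) t : 1 < count_mem a t -> subseq [:: a; a] t.
Proof.
elim: t => //= d t IH; case: eqVneq => [_|_] /=; last exact: IH.
by rewrite add1n ltnS sub1seq -has_pred1 has_count.
Qed.

Lemma split_first_other (T : eqType) (a : T) w :
  has (predC1 a) w -> exists k b t, w = nseq k a ++ b :: t /\ b != a.
Proof.
elim: w => //= c w IH; case: (eqVneq c a) => [->|ca] /=.
  by case/IH => k [b [t [-> ba]]]; exists k.+1, b, t.
by exists 0, c, w.
Qed.

Lemma count_nseq_cat_other (T : eqType) (a y : T) k s :
  a != y -> count_mem y (nseq k a ++ s) = count_mem y s.
Proof. by move=> ay; rewrite count_cat count_nseq /= (negbTE ay). Qed.

Lemma cat_injl (T : Type) (p : seq T) : injective (cat p).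
Proof. by move=> s t /(congr1 (drop (size p))); rewrite !drop_size_cat. Qed.

Lemma nat_ind3 (P : nat -> Prop) :
  P 0 -> P 1 -> P 2 -> (forall n, P n.+1 -> P n.+2 -> P n.+3) -> forall n, P n.
Proof.
move=> P0 P1 P2 step n; suff : [/\ P n, P n.+1 & P n.+2] by case.
by elim: n => [|n [_ IH1 IH2]]; split => //; apply: step.
Qed.

Lemma forbidden_subseq s w : subseq s w -> has_forbidden s -> has_forbidden w.
Proof. by move=> sw [x [y [z [sub f]]]]; exists x, y, z; rewrite (subseq_trans sub sw). Qed.

Lemma forbidden_split p u t x y z :
  x \in u -> subseq [:: y; z] t -> forbidden x y z -> has_forbidden (p ++ u ++ t).
Proof.
move=> xu sub f; exists x, y, z; split => //.
apply: (subseq_trans _ (suffix_subseq p _)).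
by rewrite -cat1s; apply: cat_subseq; rewrite ?sub1seq.
Qed.

Lemma forbidden_cons a w :
  has_forbidden (a :: w) <->
  (exists y z, subseq [:: y; z] w /\ forbidden a y z) \/ has_forbidden w.
Proof.
split.
- case=> x [y [z [/= sub f]]]; have [xa|xa] := eqVneq x a.
  + by subst x; left; exists y, z; rewrite eqxx in sub.
  + by right; exists x, y, z; rewrite (negbTE xa) in sub.
- case=> [[y [z [sub f]]]|]; last exact/forbidden_subseq/subseq_cons.
  by exists a, y, z; rewrite /= eqxx.
Qed.

Lemma forbidden_rcons s c :
  has_forbidden (rcons s c) <->
  has_forbidden s \/ exists x y, subseq [:: x; y] s /\ forbidden x y c.
Proof.
split.
- case=> x [y [z [sub f]]].
  move: sub; rewrite -[[:: x; y; z]]/(rcons [:: x; y] z) subseq_rcons2.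
  case/orP => [sub|/andP [sub /eqP zc]]; first by left; exists x, y, z.
  by right; exists x, y; rewrite -zc.
- case=> [|[x [y [sub f]]]]; first exact/forbidden_subseq/subseq_rcons.
  exists x, y, c; split => //.
  by rewrite -[[:: x; y; c]]/(rcons [:: x; y] c) subseq_rcons2 sub eqxx orbT.
Qed.

Lemma forbidden_relabel f w :
  {mono f : x y / x <= y} -> has_forbidden (map f w) <-> has_forbidden w.
Proof.
move=> f_mono.
have f_forb x y z : forbidden (f x) (f y) (f z) = forbidden x y z.
  by rewrite /forbidden !ltnNge !f_mono (inj_eq (incn_inj f_mono)).
split.
- case=> x [y [z [/subseqP [b _ E] fxyz]]].
  move: E fxyz; rewrite -map_mask.
  case: (mask b w) (mask_subseq b w) => [|x' [|y' [|z' [|? ?]]]] //= sub [-> -> ->].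
  by rewrite f_forb; exists x', y', z'.
- case=> x [y [z [sub fxyz]]]; exists (f x), (f y), (f z).
  by rewrite f_forb (map_subseq f sub).
Qed.

Lemma avoid_nil : ~ has_forbidden [::].
Proof. by case=> x [y [z []]]. Qed.

Lemma avoid_prepend k a w :
  (forall y z, subseq [:: y; z] w -> ~~ forbidden a y z) ->
  ~ has_forbidden w -> ~ has_forbidden (nseq k a ++ w).
Proof.
move=> no_pair no_forb; elim: k => //= k IH /forbidden_cons [[y [z [sub f]]]|//].
have ya : y != a by case/andP: f => /ltn_eqF ->.
suff : subseq [:: y; z] w by move/no_pair; rewrite f.
by elim: k {IH} sub => //= k IH; rewrite (negbTE ya).
Qed.

Lemma avoid_prepend_min k a w :
  {in w, forall y, a <= y} -> ~ has_forbidden w -> ~ has_forbidden (nseq k a ++ w).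
Proof.
move=> a_min; apply: avoid_prepend => y z sub.
by rewrite /forbidden negb_and -leqNgt a_min // (mem_subseq sub) ?mem_head.
Qed.

Lemma avoid_nseq k a : ~ has_forbidden (nseq k a).
Proof. by rewrite -[nseq k a]cats0; apply: avoid_prepend_min => //; exact: avoid_nil. Qed.

Lemma avoid_append_min s c :
  {in s, forall y, c < y} -> ~ has_forbidden s -> ~ has_forbidden (rcons s c).
Proof.
move=> c_min no_forb /forbidden_rcons [//|[x [y [sub]]]].
have cx : c < x by rewrite c_min // (mem_subseq sub) ?mem_head.
have cy : c < y by rewrite c_min // (mem_subseq sub) // !inE eqxx orbT.
by rewrite /forbidden; lia.
Qed.

(* Prepending a's to s b t, where s > a > b and t consists of a's: the only
   letter below a is b, and after b only a's follow. *)
Lemma avoid_prepend_dip k a b s t :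
  {in s, forall y, a < y} -> b < a -> {in t, forall z, z = a} ->
  ~ has_forbidden (s ++ b :: t) -> ~ has_forbidden (nseq k a ++ s ++ b :: t).
Proof.
move=> s_gt ba t_eq; apply: avoid_prepend => y z sub; apply/negP => /andP [ya z_cond].
have y_b : y = b.
  have := mem_subseq sub (mem_head y _); rewrite mem_cat in_cons.
  by case/or3P => [/s_gt|/eqP //|/t_eq]; lia.
have b_s : b \notin s by apply/negP => /s_gt; lia.
have /t_eq za : z \in t by apply: (subseq_pair_after b_s); move: sub; rewrite y_b.
by move: z_cond; rewrite za y_b; lia.
Qed.

(* Behind a letter b, a smaller letter a occurs at most once (b a a is 211). *)
Lemma avoid_count_below a b t : ~ has_forbidden (b :: t) -> a < b -> count_mem a t <= 1.
Proof.
move=> avoid ab; rewrite leqNgt; apply/negP => /subseq_pair_count sub.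
apply: avoid (@forbidden_split [::] [:: b] t b a a _ sub _); first exact: mem_head.
by rewrite /forbidden ab eqxx.
Qed.

Lemma min_letter_decomposition a m w :
  0 < m -> ~ has_forbidden w -> {in w, forall x, a <= x} ->
  count_mem a w = m -> has (predC1 a) w ->
  (exists2 r, w = nseq m a ++ r & a \notin r) \/
  (exists u r, [/\ w = nseq m.-1 a ++ u ++ a :: r, u != [::], a \notin u, a \notin r
                 & {in u & r, forall x z, z <= x}]).
Proof.
move=> m_pos w_avoid w_ge w_count /split_first_other [k [b [t [w_eq ba]]]].
have ab : a < b by rewrite ltn_neqAle eq_sym ba w_ge // w_eq mem_cat mem_head orbT.
have bt_avoid : ~ has_forbidden (b :: t).
  by move=> /(forbidden_subseq (suffix_subseq (nseq k a) _)); rewrite -w_eq.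
have k_count : k + count_mem a t = m.
  by rewrite -w_count w_eq count_cat count_nseq /= eqxx (negbTE ba) mul1n.
case: (posnP (count_mem a t)) => [t_count|t_count]; [left | right].
  exists (b :: t); first by rewrite w_eq -k_count t_count addn0.
  by rewrite in_cons negb_or eq_sym ba; apply/count_memPn.
(* After the first letter b > a, the letter a occurs exactly once more. *)
have a_t : a \in t by rewrite -has_pred1 has_count.
have t_count1 := avoid_count_below bt_avoid ab.
case/splitPr: a_t t_count1 k_count t_count w_eq bt_avoid => u1 r.
rewrite !count_cat /= eqxx => t_count1 k_count _ w_eq bt_avoid.
move: t_count1; rewrite addnCA add1n ltnS leqn0 addn_eq0 => /andP [/eqP c1 /eqP c2].
rewrite c1 c2 in k_count; move/count_memPn: c1 => a_u1; move/count_memPn: c2 => a_r.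
have a_u : a \notin b :: u1 by rewrite in_cons negb_or eq_sym ba.
exists (b :: u1), r; split => //.
- by rewrite w_eq -k_count; congr (nseq _ _ ++ _); lia.
- (* x in u, z in r with x < z would give the occurrence x a z of 213. *)
  move=> x z xu zr; rewrite leqNgt; apply/negP => xz; apply: bt_avoid.
  have xa : x != a by apply: contraNneq a_u => <-.
  have ax : a < x by rewrite ltn_neqAle eq_sym xa w_ge // w_eq mem_cat -cat_cons mem_cat xu orbT.
  apply: (@forbidden_split [::] (b :: u1) (a :: r) x a z xu).
    by rewrite /= eqxx sub1seq.
  by rewrite /forbidden ax xz orbT.
Qed.

Lemma leading_block a k s :
  ~ has_forbidden (rcons s a) -> {in s, forall x, a <= x} -> has (predC1 a) s ->
  count_mem a s = k -> exists2 s', s = nseq k a ++ s' & a \notin s'.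
Proof.
move=> s_avoid s_ge /split_first_other [j [b [t [s_eq ba]]]] s_count.
have ab : a < b by rewrite ltn_neqAle eq_sym ba s_ge // s_eq mem_cat mem_head orbT.
have bt_avoid : ~ has_forbidden (b :: rcons t a).
  move/(forbidden_subseq (suffix_subseq (nseq j a) _)).
  by rewrite -[b :: rcons t a]/(rcons (b :: t) a) -rcons_cat -s_eq.
have := avoid_count_below bt_avoid ab; rewrite -cats1 count_cat /= eqxx addn1 ltnS leqn0.
move=> /eqP t_count; exists (b :: t); last first.
  by rewrite in_cons negb_or eq_sym ba; apply/count_memPn.
by rewrite s_eq -s_count s_eq count_cat count_nseq /= eqxx (negbTE ba) mul1n add0n t_count addn0.
Qed.

Definition is_perm_nm (n m : nat) (w : seq nat) : Prop :=
  forall x, count_mem x w = if 0 < x <= n then m else 0.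

Lemma count_multiset n m x :
  count_mem x (multiset_nm n m) = if 0 < x <= n then m else 0.
Proof.
elim: n => [|n IH]; first by case: x.
have -> : multiset_nm n.+1 m = multiset_nm n m ++ nseq m n.+1.
  by rewrite /multiset_nm -[n.+1]addn1 iotaD map_cat flatten_cat /= cats0 addnC.
rewrite count_cat IH count_nseq /=.
by case: eqVneq => [<-|nx]; repeat case: ifP; lia.
Qed.

Lemma perm_multisetP n m w : perm_eq w (multiset_nm n m) <-> is_perm_nm n m w.
Proof.
split => [/permP w_perm x | w_counts]; first by rewrite -count_multiset w_perm.
by apply/allP => y _ /=; rewrite w_counts count_multiset.
Qed.

Lemma perm_mem_range n m w x : is_perm_nm n m w -> x \in w -> 0 < x <= n.
Proof. by move=> w_perm; rewrite -has_pred1 has_count w_perm; case: ifP. Qed.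

Lemma perm_mem n m w x : 0 < m -> is_perm_nm n m w -> 0 < x <= n -> x \in w.
Proof. by move=> m_pos w_perm x_range; rewrite -has_pred1 has_count w_perm x_range. Qed.

Lemma perm_pos n m w : is_perm_nm n m w -> {in w, forall x, 0 < x}.
Proof. by move=> w_perm x /(perm_mem_range w_perm) /andP []. Qed.

Lemma perm_suffix_pos n m p s : is_perm_nm n m (p ++ s) -> {in s, forall y, 0 < y}.
Proof. by move=> /perm_pos ps y ys; apply: ps; rewrite mem_cat ys orbT. Qed.

Lemma perm_gt1 n m w y : is_perm_nm n m w -> y \in w -> y != 1 -> 1 < y.
Proof. by move=> w_perm /(perm_pos w_perm) y_pos y1; rewrite ltn_neqAle eq_sym y1. Qed.

Lemma perm_nil m w : is_perm_nm 0 m w -> w = [::].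
Proof. by case: w => // x w /(_ x); rewrite /= eqxx; case: ifP => [/andP []|]; lia. Qed.

Definition shift (k : nat) (w : seq nat) : seq nat := map (addn k) w.

Lemma count_shift k x w : count_mem (k + x) (shift k w) = count_mem x w.
Proof. by rewrite count_map; apply: eq_count => y /=; rewrite eqn_add2l. Qed.

Lemma count_shift_small k x w : x < k -> count_mem x (shift k w) = 0.
Proof.
move=> xk; apply/count_memPn/mapP => [[y _ xy]].
by move: xk; rewrite xy ltnNge leq_addr.
Qed.

Lemma shift_gt k w : {in w, forall x, 0 < x} -> {in shift k w, forall y, k < y}.
Proof. by move=> w_pos _ /mapP [x /w_pos x_pos ->]; lia. Qed.

Lemma forbidden_shift k w : has_forbidden (shift k w) <-> has_forbidden w.
Proof. by apply: forbidden_relabel => x y; rewrite leq_add2l. Qed.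

Lemma unshiftK k w : {in w, forall y, k <= y} -> shift k (map (subn^~ k) w) = w.
Proof.
move=> w_ge; rewrite /shift -map_comp -[RHS]map_id.
by apply/eq_in_map => y /w_ge /= ky; rewrite subnKC.
Qed.

Lemma unshift_block n m k w s :
  {in s, forall y, k < y} -> (forall y, k < y -> count_mem y s = count_mem y w) ->
  subseq s w -> is_perm_nm (k + n) m w -> ~ has_forbidden w ->
  let v := map (subn^~ k) s in
  [/\ is_perm_nm n m v, ~ has_forbidden v & s = shift k v].
Proof.
move=> s_gt s_counts sub w_perm w_avoid v.
have s_v : s = shift k v by rewrite unshiftK // => y /s_gt /ltnW.
split => //.
- move=> x; rewrite -(count_shift k) -s_v.
  case: x => [|x]; last by rewrite s_counts ?w_perm; [repeat case: ifP; lia | lia].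
  by rewrite addn0; apply/count_memPn/negP => /s_gt; rewrite ltnn.
- move=> v_forb; have s_forb : has_forbidden s by rewrite s_v; apply/forbidden_shift.
  exact: w_avoid (forbidden_subseq sub s_forb).
Qed.

Section Constructions.
Variable m : nat.

Definition extA (w : seq nat) : seq nat := nseq m.-1 1 ++ shift 1 w ++ [:: 1].
Definition extB (w : seq nat) : seq nat := nseq m 1 ++ shift 1 w.
Definition extC (w : seq nat) : seq nat := nseq m.-1 1 ++ nseq m.-1 2 ++ shift 2 w ++ [:: 1; 2].
Definition base2 (j : nat) : seq nat := nseq m.-1 1 ++ nseq j 2 ++ 1 :: nseq (m - j) 2.

(* The list of all avoiding permutations of [n]_m (for m >= 2). *)
Fixpoint avoiders (n : nat) : seq (seq nat) :=
  match n with
  | 0 => [:: [::]]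
  | 1 => [:: nseq m 1]
  | 2 => map base2 (iota 0 m.+1)
  | ((n1.+1 as n2).+1 as n3).+1 =>
      map extA (avoiders n3) ++ map extB (avoiders n3) ++ map extC (avoiders n2)
  end.

Lemma avoiders_rec n :
  avoiders n.+3 = map extA (avoiders n.+2) ++ map extB (avoiders n.+2) ++ map extC (avoiders n.+1).
Proof. by []. Qed.

Hypothesis m_pos : 0 < m.

Lemma perm_extA n w : is_perm_nm n m w -> is_perm_nm n.+1 m (extA w).
Proof.
move=> w_perm [|x]; rewrite /extA !count_cat count_nseq /=.
  by rewrite count_shift_small.
rewrite -[x.+1]add1n count_shift w_perm; repeat case: ifP; lia.
Qed.

Lemma perm_extB n w : is_perm_nm n m w -> is_perm_nm n.+1 m (extB w).
Proof.
move=> w_perm [|x]; rewrite /extB !count_cat count_nseq /=.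
  by rewrite count_shift_small.
rewrite -[x.+1]add1n count_shift w_perm; repeat case: ifP; lia.
Qed.

Lemma perm_extC n w : is_perm_nm n m w -> is_perm_nm n.+2 m (extC w).
Proof.
move=> w_perm x; rewrite /extC !count_cat !count_nseq /=.
case: (ltnP x 2) => [x_small|x_big].
  by rewrite count_shift_small //; case: x x_small => [|[|]] //=; lia.
rewrite -(subnKC x_big) count_shift w_perm; repeat case: ifP; lia.
Qed.

Lemma perm_base2 j : j <= m -> is_perm_nm 2 m (base2 j).
Proof. by move=> jm x; rewrite /base2 !count_cat /= !count_nseq; case: x => [|[|[|x]]] /=; lia. Qed.

Lemma perm_ones : is_perm_nm 1 m (nseq m 1).
Proof. by move=> x; rewrite count_nseq; case: x => [|[|x]] /=; lia. Qed.

Lemma avoid_extA n w : is_perm_nm n m w -> ~ has_forbidden w -> ~ has_forbidden (extA w).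
Proof.
move=> w_perm w_avoid; rewrite /extA; apply: avoid_prepend_min.
  exact: perm_suffix_pos (perm_extA w_perm).
rewrite cats1; apply: avoid_append_min; last by move/forbidden_shift.
exact: shift_gt (perm_pos w_perm).
Qed.

Lemma avoid_extB n w : is_perm_nm n m w -> ~ has_forbidden w -> ~ has_forbidden (extB w).
Proof.
move=> w_perm w_avoid; rewrite /extB; apply: avoid_prepend_min; last by move/forbidden_shift.
by move=> y /(shift_gt (perm_pos w_perm)) /ltnW.
Qed.

Lemma avoid_extC n w : is_perm_nm n m w -> ~ has_forbidden w -> ~ has_forbidden (extC w).
Proof.
move=> w_perm w_avoid; rewrite /extC; apply: avoid_prepend_min.
  exact: perm_suffix_pos (perm_extC w_perm).
have t_gt : {in shift 2 w, forall y, 2 < y} := shift_gt (perm_pos w_perm).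
apply: avoid_prepend_dip => // [z|]; first by rewrite inE => /eqP.
(* In (w+2) 1 2 a forbidden triple would have to end with the final 2. *)
rewrite -[[:: 1; 2]]/([:: 1] ++ [:: 2]) catA !cats1.
case/forbidden_rcons => [|[x [y [sub]]]].
  by apply: avoid_append_min; [move=> y /t_gt /ltnW | move/forbidden_shift].
have letters u : u \in rcons (shift 2 w) 1 -> (u == 1) || (2 < u).
  by rewrite mem_rcons in_cons => /orP [->|/t_gt ->]; rewrite ?orbT.
have /letters := mem_subseq sub (mem_head x _).
have /letters : y \in rcons (shift 2 w) 1 by apply: (mem_subseq sub); rewrite !inE eqxx orbT.
by rewrite /forbidden; lia.
Qed.

Lemma avoid_base2 j : j <= m -> ~ has_forbidden (base2 j).
Proof.
move=> jm; rewrite /base2; apply: avoid_prepend_min.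
  exact: perm_suffix_pos (perm_base2 jm).
apply: (@avoid_prepend_dip _ 2 1 [::]) => // [z|]; first by rewrite mem_nseq => /andP [_ /eqP].
apply: (@avoid_prepend_min 1 1); last exact: avoid_nseq.
by move=> y; rewrite mem_nseq => /andP [_ /eqP ->].
Qed.

Lemma avoiders_sound n w : w \in avoiders n -> is_perm_nm n m w /\ ~ has_forbidden w.
Proof.
elim/nat_ind3: n w => [w|w|w|n IH1 IH2 w].
- by rewrite inE => /eqP ->; split; [case | exact: avoid_nil].
- by rewrite inE => /eqP ->; split; [exact: perm_ones | exact: avoid_nseq].
- case/mapP => j; rewrite mem_iota => /andP [_ jm] ->.
  by split; [exact: perm_base2 | exact: avoid_base2].
- rewrite avoiders_rec !mem_cat => /or3P [/mapP [v /IH2 [v_perm v_avoid] ->]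
    | /mapP [v /IH2 [v_perm v_avoid] ->] | /mapP [v /IH1 [v_perm v_avoid] ->]].
  + by split; [exact: perm_extA | exact: avoid_extA v_perm v_avoid].
  + by split; [exact: perm_extB | exact: avoid_extB v_perm v_avoid].
  + by split; [exact: perm_extC | exact: avoid_extC v_perm v_avoid].
Qed.

End Constructions.

Section Completeness.
Variable m : nat.
Hypothesis m_gt1 : 1 < m.
Let m_pos : 0 < m := ltnW m_gt1.

Lemma complete_caseB n w r :
  is_perm_nm n.+1 m w -> ~ has_forbidden w -> w = nseq m 1 ++ r -> 1 \notin r ->
  exists2 v, is_perm_nm n m v /\ ~ has_forbidden v & w = extB m v.
Proof.
move=> w_perm w_avoid w_eq one_r.
have r_gt : {in r, forall y, 1 < y}.
  move=> y yr; apply: (perm_gt1 w_perm); first by rewrite w_eq mem_cat yr orbT.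
  by apply: contraNneq one_r => <-.
have r_counts y : 1 < y -> count_mem y r = count_mem y w.
  by move=> y_gt; rewrite w_eq count_nseq_cat_other // neq_ltn y_gt.
have r_sub : subseq r w by rewrite w_eq suffix_subseq.
have [v_perm v_avoid r_eq] := unshift_block r_gt r_counts r_sub w_perm w_avoid.
by exists (map (subn^~ 1) r) => //; rewrite w_eq /extB -r_eq.
Qed.

Lemma complete_caseA n w u :
  is_perm_nm n.+1 m w -> ~ has_forbidden w -> w = nseq m.-1 1 ++ u ++ [:: 1] -> 1 \notin u ->
  exists2 v, is_perm_nm n m v /\ ~ has_forbidden v & w = extA m v.
Proof.
move=> w_perm w_avoid w_eq one_u.
have u_gt : {in u, forall y, 1 < y}.
  move=> y yu; apply: (perm_gt1 w_perm); first by rewrite w_eq !mem_cat yu orbT.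
  by apply: contraNneq one_u => <-.
have u_counts y : 1 < y -> count_mem y u = count_mem y w.
  move=> y_gt; have y1 : 1 != y by rewrite neq_ltn y_gt.
  by rewrite w_eq count_nseq_cat_other // count_cat /= (negbTE y1) addn0 (addn0 (count_mem y u)).
have u_sub : subseq u w by rewrite w_eq subseq_middle.
have [v_perm v_avoid u_eq] := unshift_block u_gt u_counts u_sub w_perm w_avoid.
by exists (map (subn^~ 1) u) => //; rewrite w_eq /extA -u_eq.
Qed.

Lemma complete_caseC_tail n w u r :
  is_perm_nm n.+3 m w -> ~ has_forbidden w -> w = nseq m.-1 1 ++ u ++ 1 :: r ->
  u != [::] -> r != [::] -> 1 \notin u -> 1 \notin r -> {in u & r, forall x z, z <= x} ->
  r = [:: 2].
Proof.
move=> w_perm w_avoid w_eq u_nil r_nil one_u one_r ur.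
have ge2 y : y \in u ++ r -> 1 < y.
  move=> y_in; apply: (perm_gt1 w_perm).
    by move: y_in; rewrite w_eq !mem_cat in_cons => /orP [->|->]; rewrite ?orbT.
  by apply: contraNneq (_ : 1 \notin u ++ r) => [<-//|]; rewrite mem_cat negb_or one_u.
have count2 : count_mem 2 u + count_mem 2 r = m.
  by have := w_perm 2; rewrite w_eq count_nseq_cat_other // count_cat /=.
(* A letter x > 2 of u followed by two copies of 2 in r would form 211. *)
have no_x22 x : x \in u -> 2 < x -> ~~ subseq [:: 2; 2] r.
  move=> xu x_gt; apply/negP => sub; apply: w_avoid; rewrite w_eq.
  apply: (forbidden_split _ xu (subseq_trans sub (subseq_cons r 1))).
  by rewrite /forbidden x_gt eqxx.
have two_u : 2 \in u.
  apply: contraT => two_u.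
  have [x xu] : exists x, x \in u by case: (u) u_nil => // x ? _; exists x; rewrite mem_head.
  have x_gt : 2 < x.
    rewrite ltn_neqAle ge2 ?mem_cat ?xu // andbT.
    by apply: contraNneq two_u => ->.
  have r_count : count_mem 2 r = m by rewrite -count2 (count_memPn two_u).
  by case/negP: (no_x22 x xu x_gt); apply: subseq_pair_count; rewrite r_count.
have r_two z : z \in r -> z = 2.
  by move=> zr; apply/eqP; rewrite eqn_leq ur // ge2 // mem_cat zr orbT.
have three_u : 3 \in u.
  have := perm_mem m_pos w_perm (isT : 0 < 3 <= n.+3).
  rewrite w_eq !mem_cat in_cons mem_nseq andbF /=.
  by case/orP => // /r_two.
have r_eq : r = nseq (size r) 2 by apply/all_pred1P/allP => z /r_two ->.
move: (no_x22 3 three_u isT) r_nil; rewrite r_eq.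
by case: (size r) => [|[|k]] //=; rewrite sub0seq.
Qed.

Lemma complete_caseC n w u r :
  is_perm_nm n.+3 m w -> ~ has_forbidden w -> w = nseq m.-1 1 ++ u ++ 1 :: r ->
  u != [::] -> r != [::] -> 1 \notin u -> 1 \notin r -> {in u & r, forall x z, z <= x} ->
  exists2 v, is_perm_nm n.+1 m v /\ ~ has_forbidden v & w = extC m v.
Proof.
move=> w_perm w_avoid w_eq u_nil r_nil one_u one_r ur.
have r2 := complete_caseC_tail w_perm w_avoid w_eq u_nil r_nil one_u one_r ur.
subst r; have u_in y : y \in u -> y \in w by rewrite w_eq !mem_cat => ->; rewrite orbT.
have u_ge2 : {in u, forall y, 2 <= y}.
  by move=> y yu; apply: (perm_gt1 w_perm (u_in y yu)); apply: contraNneq one_u => <-.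
have three_u : 3 \in u.
  have := perm_mem m_pos w_perm (isT : 0 < 3 <= n.+3).
  by rewrite w_eq !mem_cat mem_nseq andbF /= !inE orbF.
have u_has : has (predC1 2) u by apply/hasP; exists 3.
have u_count : count_mem 2 u = m.-1.
  have := w_perm 2; rewrite w_eq count_nseq_cat_other // count_cat /= => u_count.
  by rewrite -(prednK m_pos) -u_count addn1.
have u2_sub : subseq (rcons u 2) w.
  rewrite w_eq -cats1; apply: subseq_trans (suffix_subseq (nseq m.-1 1) _).
  exact: cat_subseq (subseq_refl u) (isT : subseq [:: 2] [:: 1; 2]).
have u2_avoid : ~ has_forbidden (rcons u 2) by move/(forbidden_subseq u2_sub).
have [u' u_eq two_u'] := leading_block u2_avoid u_ge2 u_has u_count.
have u'_gt : {in u', forall y, 2 < y}.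
  move=> y yu'; rewrite ltn_neqAle u_ge2 ?andbT; last by rewrite u_eq mem_cat yu' orbT.
  by apply: contraNneq two_u' => ->.
have u'_counts y : 2 < y -> count_mem y u' = count_mem y w.
  move=> y_gt; have [y1 y2] : 1 != y /\ 2 != y by rewrite !neq_ltn y_gt (ltnW y_gt).
  rewrite w_eq u_eq -catA !count_nseq_cat_other // count_cat /= (negbTE y1) (negbTE y2).
  exact: esym (addn0 (count_mem y u')).
have u'_sub : subseq u' w by rewrite w_eq u_eq -catA catA subseq_middle.
have [v_perm v_avoid u'_eq] := unshift_block u'_gt u'_counts u'_sub w_perm w_avoid.
by exists (map (subn^~ 2) u') => //; rewrite w_eq u_eq /extC -u'_eq -catA.
Qed.

Lemma avoiders_complete_1 w : is_perm_nm 1 m w -> w \in avoiders m 1.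
Proof.
move=> w_perm; rewrite inE; apply/eqP.
have w_eq : w = nseq (size w) 1.
  by apply/all_pred1P/allP => y /(perm_mem_range w_perm); case: y => [|[|]].
have w_size : size w = m by have := w_perm 1; rewrite {1}w_eq count_nseq /= mul1n.
by rewrite w_eq w_size.
Qed.

Lemma avoiders_complete_2 w : is_perm_nm 2 m w -> ~ has_forbidden w -> w \in avoiders m 2.
Proof.
move=> w_perm w_avoid.
have w_has : has (predC1 1) w by apply/hasP; exists 2; first exact: perm_mem w_perm _.
have twos s : {subset s <= w} -> 1 \notin s -> s = nseq (size s) 2.
  move=> sw one_s; apply/all_pred1P/allP => y ys.
  have := perm_mem_range w_perm (sw y ys); case: y ys => [|[|[|]]] // ys.
  by rewrite ys in one_s.
have count2 : count_mem 2 w = m by rewrite w_perm.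
apply/mapP; case: (min_letter_decomposition m_pos w_avoid (perm_pos w_perm) (w_perm 1) w_has).
- move=> [r w_eq one_r]; exists 0; first by rewrite mem_iota.
  have r_eq : r = nseq (size r) 2 by apply: twos => // y yr; rewrite w_eq mem_cat yr orbT.
  move: count2; rewrite w_eq count_nseq_cat_other // r_eq count_nseq /= mul1n => size_r.
  by rewrite size_r /base2 subn0 /= -cat1s catA -[[:: 1]]/(nseq 1 1) -nseqD addn1 prednK.
- move=> [u [r [w_eq _ one_u one_r _]]].
  have u_eq : u = nseq (size u) 2 by apply: twos => // y yu; rewrite w_eq !mem_cat yu orbT.
  have r_eq : r = nseq (size r) 2.
    by apply: twos => // y yr; rewrite w_eq !mem_cat in_cons yr !orbT.
  move: count2; rewrite w_eq count_nseq_cat_other // count_cat /= {1}u_eq {1}r_eq.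
  rewrite !count_nseq /= !mul1n add0n => sizes.
  exists (size u); first by rewrite in_cons mem_iota; lia.
  by rewrite /base2 {1}u_eq {1}r_eq -sizes addKn.
Qed.

Lemma avoiders_complete_step n :
  (forall w, is_perm_nm n.+1 m w -> ~ has_forbidden w -> w \in avoiders m n.+1) ->
  (forall w, is_perm_nm n.+2 m w -> ~ has_forbidden w -> w \in avoiders m n.+2) ->
  forall w, is_perm_nm n.+3 m w -> ~ has_forbidden w -> w \in avoiders m n.+3.
Proof.
move=> IH1 IH2 w w_perm w_avoid.
have w_has : has (predC1 1) w by apply/hasP; exists 2; first exact: perm_mem w_perm _.
rewrite avoiders_rec !mem_cat.
case: (min_letter_decomposition m_pos w_avoid (perm_pos w_perm) (w_perm 1) w_has).
  move=> [r w_eq one_r]; have [v [v_perm v_avoid] ->] := complete_caseB w_perm w_avoid w_eq one_r.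
  by rewrite map_f ?orbT ?IH2.
move=> [u [r [w_eq u_nil one_u one_r ur]]]; have [r_nil|r_nil] := eqVneq r [::].
  subst r; have [v [v_perm v_avoid] ->] := complete_caseA w_perm w_avoid w_eq one_u.
  by rewrite map_f ?IH2.
have [v [v_perm v_avoid] ->] := complete_caseC w_perm w_avoid w_eq u_nil r_nil one_u one_r ur.
by rewrite map_f ?orbT ?IH1.
Qed.

Lemma avoiders_complete n w : is_perm_nm n m w -> ~ has_forbidden w -> w \in avoiders m n.
Proof.
elim/nat_ind3: n w => [w w_perm _|w w_perm _|w|n IH1 IH2].
- by rewrite (perm_nil w_perm) mem_head.
- exact: avoiders_complete_1.
- exact: avoiders_complete_2.
- exact: avoiders_complete_step.
Qed.

End Completeness.

Section Uniqueness.
Variable m : nat.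

Lemma base2_inj : injective (base2 m).
Proof.
have index_one j : index 1 (drop m.-1 (base2 m j)) = j.
  by rewrite drop_size_cat ?size_nseq // index_cat mem_nseq andbF size_nseq /= addn0.
by move=> i j eq_ij; rewrite -(index_one i) -(index_one j) eq_ij.
Qed.

Lemma extA_inj : injective (extA m).
Proof. by move=> v w /cat_injl; rewrite !cats1 => /rcons_inj [] /(inj_map (@addnI 1)). Qed.

Lemma extB_inj : injective (extB m).
Proof. by move=> v w /cat_injl /(inj_map (@addnI 1)). Qed.

Lemma extC_inj : injective (extC m).
Proof.
move=> v w /cat_injl /cat_injl; rewrite -[[:: 1; 2]]/([:: 1] ++ [:: 2]) !catA !cats1.
by move=> /rcons_inj [] /rcons_inj [] /(inj_map (@addnI 2)).
Qed.

(* The three shapes are told apart by the last letter and by the letter at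
   position m - 1 (counted from 0). *)
Hypothesis m_gt1 : 1 < m.

Lemma extA_neq_extB v w : w != [::] -> {in w, forall x, 0 < x} -> extA m v != extB m w.
Proof.
move=> w_nil w_pos; apply/eqP => /(congr1 (last 0)).
rewrite /extA /extB !last_cat /=; case/lastP: w w_nil w_pos => // w x _ w_pos.
rewrite /shift map_rcons last_rcons => /esym/eqP; rewrite eqn_add2l.
by rewrite eqn0Ngt w_pos // mem_rcons mem_head.
Qed.

Lemma extA_neq_extC v w : extA m v != extC m w.
Proof. by apply/eqP => /(congr1 (last 0)); rewrite /extA /extC !last_cat. Qed.

Lemma extB_neq_extC v w : extB m v != extC m w.
Proof.
apply/eqP => /(congr1 (nth 0 ^~ m.-1)); rewrite /extB /extC !nth_cat !size_nseq.
rewrite ltnn subnn (ltn_predL m) (ltnW m_gt1) !nth_nseq (ltn_predL m) (ltnW m_gt1).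
by case: m m_gt1 => [|[|k]].
Qed.

Lemma avoiders_uniq n : uniq (avoiders m n).
Proof.
have m_pos : 0 < m := ltnW m_gt1.
elim/nat_ind3: n => [//|//||n U1 U2].
  change (uniq (map (base2 m) (iota 0 m.+1))).
  by rewrite (map_inj_uniq base2_inj) iota_uniq.
rewrite avoiders_rec !cat_uniq (map_inj_uniq extA_inj) (map_inj_uniq extB_inj).
rewrite (map_inj_uniq extC_inj) U1 U2 has_cat !negb_or !andTb -andbA andbT.
apply/and3P; split; apply/hasPn => _ /mapP [w w_in ->]; apply/negP => /mapP [v v_in /eqP].
- have [w_perm _] := avoiders_sound m_pos w_in.
  rewrite eq_sym (negbTE (extA_neq_extB v _ (perm_pos w_perm))) //.
  by apply: contraTneq (perm_mem m_pos w_perm (isT : 0 < 1 <= n.+2)) => ->.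
- by rewrite eq_sym (negbTE (extA_neq_extC _ _)).
- by rewrite eq_sym (negbTE (extB_neq_extC _ _)).
Qed.

End Uniqueness.

Lemma s_nm_avoiders n m :
  1 < m -> s_nm n m [:: [:: 2; 1; 1]; [:: 2; 1; 3]] = size (avoiders m n).
Proof.
move=> m_gt1; rewrite /s_nm -size_filter; apply/perm_size/uniq_perm.
- by rewrite filter_uniq // permutations_uniq.
- exact: avoiders_uniq.
- move=> w; rewrite mem_filter mem_permutations; apply/andP/idP.
  + by move=> [/avoids_211_213 w_avoid /perm_multisetP w_perm]; exact: avoiders_complete.
  + move=> w_in; have [w_perm w_avoid] := avoiders_sound (ltnW m_gt1) w_in.
    by split; [apply/avoids_211_213 | apply/perm_multisetP].
Qed.

Lemma size_avoiders_rec m n :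
  size (avoiders m n.+3) = 2 * size (avoiders m n.+2) + size (avoiders m n.+1).
Proof. by rewrite avoiders_rec !size_cat !size_map addnA mul2n addnn. Qed.

Import GRing.Theory Num.Theory.
Local Open Scope ring_scope.

Section ClosedForm.
Variables (R : rcfType) (m : nat).
Local Notation sqrt2 := (Num.sqrt (2%:R : R)).

(* The solution of a_(k+2) = 2 a_(k+1) + a_k with a_0 = 1, a_1 = m + 1. *)
Definition pell_closed_form (k : nat) : R :=
  4%:R^-1 * ((2%:R - m%:R * sqrt2) * (1 - sqrt2) ^+ k + (2%:R + m%:R * sqrt2) * (1 + sqrt2) ^+ k).

Lemma sqrt2_mul : sqrt2 * sqrt2 = 2%:R.
Proof. by rewrite -expr2 sqr_sqrtr // ler0n. Qed.

Lemma pell_closed_form0 : pell_closed_form 0 = 1.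
Proof.
rewrite /pell_closed_form !expr0 !mulr1.
have -> : 2%:R - m%:R * sqrt2 + (2%:R + m%:R * sqrt2) = 4%:R :> R.
  by rewrite -[4%N]/(2 + 2)%N natrD; ring.
by rewrite mulVf // pnatr_eq0.
Qed.

Lemma pell_closed_form1 : pell_closed_form 1 = m.+1%:R.
Proof.
rewrite /pell_closed_form !expr1.
have -> : (2%:R - m%:R * sqrt2) * (1 - sqrt2) + (2%:R + m%:R * sqrt2) * (1 + sqrt2)
          = 4%:R + 2%:R * m%:R * (sqrt2 * sqrt2) :> R.
  by rewrite -[4%N]/(2 + 2)%N natrD; ring.
by rewrite sqrt2_mul -addn1 natrD; field.
Qed.

(* Both 1 + sqrt2 and 1 - sqrt2 are roots of X^2 = 2 X + 1. *)
Lemma pell_root_sq e : e * e = 2%:R -> (1 + e) ^+ 2 = 2%:R * (1 + e) + 1 :> R.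
Proof. by move=> ee; rewrite expr2 mulrDr !mulrDl ee; ring. Qed.

Lemma pell_closed_form_rec k :
  pell_closed_form k.+2 = 2%:R * pell_closed_form k.+1 + pell_closed_form k.
Proof.
have msqrt2_mul : - sqrt2 * - sqrt2 = 2%:R by rewrite mulrNN sqrt2_mul.
rewrite /pell_closed_form -[k.+2]addn2 -[k.+1]addn1 !exprD (pell_root_sq sqrt2_mul).
by rewrite (pell_root_sq msqrt2_mul) !expr1; ring.
Qed.

Lemma pell_closed_formE (a : nat -> nat) :
  a 0%N = 1%N -> a 1%N = m.+1 -> (forall k, a k.+2 = 2 * a k.+1 + a k)%N ->
  forall k, (a k)%:R = pell_closed_form k.
Proof.
move=> a0 a1 a_rec k.
suff : (a k)%:R = pell_closed_form k /\ (a k.+1)%:R = pell_closed_form k.+1 by case.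
elim: k => [|k [IH0 IH1]]; first by rewrite a0 a1 pell_closed_form0 pell_closed_form1.
by split => //; rewrite a_rec natrD natrM IH0 IH1 pell_closed_form_rec.
Qed.

End ClosedForm.

Theorem mainTheorem11 (R : rcfType) (m n : nat) :
  (2 <= m)%N -> (1 <= n)%N ->
  ((s_nm n m [:: [:: 2; 1; 1]; [:: 2; 1; 3]]%N)%:R : R) =
  4%:R^-1 * ((2%:R - m%:R * Num.sqrt 2%:R) * (1 - Num.sqrt 2%:R) ^+ (n - 1)
           + (2%:R + m%:R * Num.sqrt 2%:R) * (1 + Num.sqrt 2%:R) ^+ (n - 1)).
Proof.
move=> m_gt1 n_pos; rewrite s_nm_avoiders //.
case: n n_pos => // n _; rewrite subSS subn0.
apply: (@pell_closed_formE R m (fun k => size (avoiders m k.+1))) => //.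
- by rewrite /= size_map size_iota.
- exact: size_avoiders_rec.
Qed.
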